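(* Let $a$ and $b$ be coprime odd integers and let $\beta$ be a positive integer such that $2^\beta\,\|\,(a+b)$. Then: 1) $G_{(a,b)}(\beta)\neq\emptyset$ and every element of $G_{(a,b)}(\beta)$ is odd; 2) $G_{(a,b)}(\beta+1)=\emptyset$.
   Context: For coprime nonzero integers $a,b$ and an integer $\beta\geq0$, $G_{(a,b)}(\beta)$ is the set of positive integers $d$ such that $2^\beta d\mid(a^k+b^k)$ for some positive integer $k$. $2^\beta\,\|\,m$ means $2^\beta\mid m$ and $2^{\beta+1}\nmid m$. *)

From mathcomp Require Import all_boot all_order all_algebra.
Set Implicit Arguments. Unset Strict Implicit. Unset Printing Implicit Defensive.
Import Order.TTheory GRing.Theory Num.Theory.
Local Open Scope ring_scope.

Definition G (a b : int) (beta : nat) (d : nat) : Prop :=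
  (0 < d)%N /\
  exists k : nat, (0 < k)%N /\ (((2 ^ beta * d)%N)%:Z %| a ^+ k + b ^+ k)%Z.

Definition exact_pow2_div (beta : nat) (m : int) : Prop :=
  ((2 ^ beta)%N%:Z %| m)%Z /\ ~~ ((2 ^ beta.+1)%N%:Z %| m)%Z.

From mathcomp Require Import all_boot all_order all_algebra.
From mathcomp Require Import zify ring.
Set Implicit Arguments. Unset Strict Implicit. Unset Printing Implicit Defensive.
Import Order.TTheory GRing.Theory Num.Theory.
Local Open Scope ring_scope.

(* The sums s_k = a^k + b^k satisfy s_(k+2) = (a + b) s_(k+1) - a b s_k.  If
   a, b are odd and 2^beta || a + b, then (a + b) s_(k+1) is divisible by
   2^(beta+1), because s_(k+1) is even, while a b is odd; so modulo 2^(beta+1)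
   divisibility of s_(k+2) is equivalent to that of s_k.  Neither s_1 = a + b
   nor s_2 = a^2 + b^2 = 2 (mod 4) is divisible by 2^(beta+1), hence no s_k is.
   This gives both G_(a,b)(beta+1) = {} and the oddness of every element of
   G_(a,b)(beta), while 1 lies in G_(a,b)(beta) with k = 1. *)

Lemma addrXX_rec (R : comPzRingType) (a b : R) (k : nat) :
  a ^+ k.+2 + b ^+ k.+2 = (a + b) * (a ^+ k.+1 + b ^+ k.+1) - a * b * (a ^+ k + b ^+ k).
Proof. by rewrite !exprS; ring. Qed.

Lemma dvdz_addXX_rec (m a b : int) (k : nat) :
  coprimez m (a * b) -> (m %| (a + b) * (a ^+ k.+1 + b ^+ k.+1))%Z ->
  (m %| a ^+ k.+2 + b ^+ k.+2)%Z = (m %| a ^+ k + b ^+ k)%Z.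
Proof. by move=> mab_coprime dvd_m; rewrite addrXX_rec rpredBl // Gauss_dvdzr. Qed.

Lemma ndvdz_addXX (m a b : int) :
  coprimez m (a * b) -> (forall k : nat, (m %| (a + b) * (a ^+ k.+1 + b ^+ k.+1))%Z) ->
  ~~ (m %| a + b)%Z -> ~~ (m %| a ^+ 2 + b ^+ 2)%Z ->
  forall k : nat, (0 < k)%N -> ~~ (m %| a ^+ k + b ^+ k)%Z.
Proof.
move=> mab_coprime dvd_m ndvd1 ndvd2.
elim/ltn_ind=> -[|[|[|k]]] IH // _.
by rewrite dvdz_addXX_rec //; apply: IH.
Qed.

Lemma coprimez2 (a : int) : coprimez 2 a = ~~ (2 %| a)%Z.
Proof. by rewrite coprimezE prime_coprime. Qed.

Lemma odd_exprz (a : int) (k : nat) : ~~ (2 %| a)%Z -> ~~ (2 %| a ^+ k)%Z.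
Proof. by rewrite -!coprimez2; apply: coprimezXr. Qed.

Lemma dvdz2_addXX (a b : int) (k : nat) :
  ~~ (2 %| a)%Z -> ~~ (2 %| b)%Z -> (2 %| a ^+ k + b ^+ k)%Z.
Proof. by move=> /(odd_exprz k) + /(odd_exprz k); lia. Qed.

Lemma dvdz4_sqr_sub1 (a : int) : ~~ (2 %| a)%Z -> (4 %| a ^+ 2 - 1)%Z.
Proof. by move=> a_odd; rewrite subr_sqr_1 (_ : 4 = 2 * 2) // dvdz_mul //; lia. Qed.

Lemma ndvdz4_addX2 (a b : int) :
  ~~ (2 %| a)%Z -> ~~ (2 %| b)%Z -> ~~ (4 %| a ^+ 2 + b ^+ 2)%Z.
Proof.
move=> /dvdz4_sqr_sub1 + /dvdz4_sqr_sub1.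
set A := a ^+ 2; set B := b ^+ 2; lia.
Qed.

Lemma pow2_ndvdz_addXX (a b : int) (beta : nat) :
  ~~ (2 %| a)%Z -> ~~ (2 %| b)%Z -> (0 < beta)%N -> exact_pow2_div beta (a + b) ->
  forall k : nat, (0 < k)%N -> ~~ ((2 ^ beta.+1)%N%:Z %| a ^+ k + b ^+ k)%Z.
Proof.
move=> a_odd b_odd beta_gt0 [dvd_ab ndvd_ab]; apply: ndvdz_addXX => //.
- by rewrite -natz natrX coprimezXl // coprimezMr !coprimez2 a_odd b_odd.
- by move=> k; rewrite expnSr PoszM dvdz_mul // dvdz2_addXX.
- have := ndvdz4_addX2 a_odd b_odd; apply: contra; apply: dvdz_trans.
  by rewrite dvdzE (dvdn_exp2l 2 (_ : 2 <= beta.+1)%N).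
Qed.

Theorem lemma2p14 (a b : int) (beta : nat) :
  coprimez a b -> ~~ (2 %| a)%Z -> ~~ (2 %| b)%Z -> (0 < beta)%N ->
  exact_pow2_div beta (a + b) ->
  ((exists d : nat, G a b beta d) /\ (forall d : nat, G a b beta d -> odd d))
  /\ (forall d : nat, ~ G a b beta.+1 d).
Proof.
move=> _ a_odd b_odd beta_gt0 exact_ab.
have ndvd := pow2_ndvdz_addXX a_odd b_odd beta_gt0 exact_ab.
split; [split|].
- exists 1%N; split=> //; exists 1%N; split=> //.
  by rewrite muln1 !expr1; case: exact_ab.
- move=> d [_ [k [k_gt0 dvd_k]]]; apply/negPn/negP => d_even.
  apply: (negP (ndvd k k_gt0)); apply: dvdz_trans dvd_k.
  by rewrite dvdzE /= expnSr dvdn_pmul2l ?expn_gt0 // dvdn2.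
- move=> d [_ [k [k_gt0 dvd_k]]]; apply: (negP (ndvd k k_gt0)).
  by apply: dvdz_trans dvd_k; rewrite dvdzE /= dvdn_mulr.
Qed.
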